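(* Let $\epsilon>0$ and let $X$ be $\mathbb{R}^3$ equipped with the metric (in polar coordinates $r\ge0$, $\theta\in S^2$) $$g_{\epsilon,3}=dr^2+\Big(\tfrac12 r^{1+\epsilon}\Big)^2 g_{S^2},$$ with vertex $V$ at $r=0$, and with the induced length distance. Then there exists $\eta>0$ such that for any $x,y\in B_\eta(V)$, the vertex $V$ is not an interior point of any geodesic from $x$ to $y$.
   Context: $g_{S^2}$ is the round metric on the unit sphere $S^2$, and $B_\eta(V)$ is the open metric ball of radius $\eta$ about $V$, i.e. $\{r<\eta\}$. *)

From Stdlib Require Import Reals Lra.
From Coquelicot Require Import Coquelicot.
Open Scope R_scope.

Definition pt := (R * R * R)%type.
Definition px (p : pt) : R := fst (fst p).
Definition py (p : pt) : R := snd (fst p).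
Definition pz (p : pt) : R := snd p.
Definition dot (p q : pt) : R := px p * px q + py p * py q + pz p * pz q.
Definition enorm (p : pt) : R := sqrt (dot p p).
Definition origin : pt := (0, 0, 0).

(* The squared length of the tangent vector v at the point x for
   g_{eps,3} = dr^2 + (1/2 r^(1+eps))^2 g_{S^2}, written in Cartesian coordinates:
   for r = |x| > 0, dr(v) = x.v / r and r^2 g_{S^2}(v,v) = |v|^2 - dr(v)^2,
   so g(v,v) = dr(v)^2 + ((1/2 r^(1+eps)) / r)^2 (|v|^2 - dr(v)^2).
   At the vertex (degenerate point, measure-zero for curves) we set it to 0. *)
Definition metric_sq (eps : R) (x v : pt) : R :=
  let r := enorm x in
  if Req_EM_T r 0 then 0 else
  let vr := dot x v / r in
  vr ^ 2 + (/ 2 * Rpower r (1 + eps) / r) ^ 2 * (dot v v - vr ^ 2).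

Definition C1 (f : R -> R) : Prop :=
  forall t, ex_derive f t /\ continuous (Derive f) t.

Definition velocity (g : R -> pt) (t : R) : pt :=
  (Derive (fun s => px (g s)) t, Derive (fun s => py (g s)) t,
   Derive (fun s => pz (g s)) t).

Definition speed (eps : R) (g : R -> pt) (t : R) : R :=
  sqrt (metric_sq eps (g t) (velocity g t)).

Definition C1_piece (c : R -> pt) (a b : R) (g : R -> pt) : Prop :=
  C1 (fun t => px (g t)) /\ C1 (fun t => py (g t)) /\ C1 (fun t => pz (g t)) /\
  (forall t, a <= t <= b -> g t = c t).

Fixpoint psum (f : nat -> R) (n : nat) : R :=
  match n with O => 0 | S m => psum f m + f m end.

Definition curve_length_is (eps : R) (c : R -> pt) (x y : pt) (L : R) : Prop :=
  c 0 = x /\ c 1 = y /\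
  exists (n : nat) (p : nat -> R) (g : nat -> R -> pt),
    p 0%nat = 0 /\ p n = 1 /\
    (forall i, (i < n)%nat -> p i < p (S i)) /\
    (forall i, (i < n)%nat ->
        C1_piece c (p i) (p (S i)) (g i) /\
        ex_RInt (speed eps (g i)) (p i) (p (S i))) /\
    L = psum (fun i => RInt (speed eps (g i)) (p i) (p (S i))) n.

Definition ldist (eps : R) (x y : pt) : R :=
  real (Glb_Rbar (fun L => exists c, curve_length_is eps c x y L)).

(* A (minimizing) geodesic from x to y: an isometric embedding of [0, d(x,y)]. *)
Definition geodesic (eps : R) (x y : pt) (gam : R -> pt) : Prop :=
  gam 0 = x /\ gam (ldist eps x y) = y /\
  forall s t, 0 <= s <= ldist eps x y -> 0 <= t <= ldist eps x y ->
    ldist eps (gam s) (gam t) = Rabs (s - t).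

From Stdlib Require Import Reals Lra Psatz.
From Coquelicot Require Import Coquelicot.
Open Scope R_scope.

(* Along any curve the radius changes no faster than the speed (|dr| <= |v|_g), so a geodesic
   from x to y through the vertex V has length at least |x| + |y|.  But the curve that runs
   radially from x down to radius m = min |x| |y|, along a great circle at radius m, and
   radially out to y is shorter: the circle of radius m has length at most
   PI * m^(1+eps) / 2 < 2 m once m < 1. *)

Definition vscale (k : R) (u : pt) : pt := (k * px u, k * py u, k * pz u).
Definition vadd (u v : pt) : pt := (px u + px v, py u + py v, pz u + pz v).
Definition plane_point (u e : pt) (a b : R) : pt := vadd (vscale a u) (vscale b e).
Definition orthonormal (u e : pt) : Prop := dot u u = 1 /\ dot e e = 1 /\ dot u e = 0.

Ltac pt_unfold := unfold plane_point, vadd, vscale, dot, origin in *; cbn [px py pz fst snd] in *.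

Lemma dot_self_ge0 u : 0 <= dot u u.
Proof. pt_unfold; nra. Qed.

Lemma dot_Cauchy_Schwarz u v : dot u v * dot u v <= dot u u * dot v v.
Proof.
  destruct u as [[u1 u2] u3], v as [[v1 v2] v3]; pt_unfold.
  assert (0 <= (u1*v2-u2*v1)^2 + (u1*v3-u3*v1)^2 + (u2*v3-u3*v2)^2)
    by (repeat apply Rplus_le_le_0_compat; apply pow2_ge_0).
  nra.
Qed.

Lemma dot_self_eq0 u : dot u u = 0 -> u = origin.
Proof.
  destruct u as [[u1 u2] u3]; pt_unfold; intros H.
  assert (u1 = 0) by nra; assert (u2 = 0) by nra; assert (u3 = 0) by nra.
  now subst.
Qed.

Lemma enorm_origin : enorm origin = 0.
Proof. unfold enorm; pt_unfold; transitivity (sqrt 0); [f_equal; ring | apply sqrt_0]. Qed.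

Lemma enorm_eq0 u : enorm u = 0 -> u = origin.
Proof. intros H; apply dot_self_eq0, sqrt_eq_0; [apply dot_self_ge0 | exact H]. Qed.

Lemma enorm_sqr u : enorm u * enorm u = dot u u.
Proof. apply sqrt_sqrt, dot_self_ge0. Qed.

Lemma dot_plane_point u e a b c d : orthonormal u e ->
  dot (plane_point u e a b) (plane_point u e c d) = a * c + b * d.
Proof.
  intros (Hu & He & Hue).
  transitivity (a * c * dot u u + (a * d + b * c) * dot u e + b * d * dot e e);
    [pt_unfold; ring | rewrite Hu, He, Hue; ring].
Qed.

Lemma plane_point_scale u e r a b :
  plane_point u e (r * a) (r * b) = vscale r (plane_point u e a b).
Proof. pt_unfold; f_equal; [f_equal|]; ring. Qed.

Lemma direction_unit p : 0 < enorm p ->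
  dot (vscale (/ enorm p) p) (vscale (/ enorm p) p) = 1.
Proof.
  intros Hp; pose proof (enorm_sqr p) as Hsq.
  transitivity (dot p p / (enorm p * enorm p)); [pt_unfold; field; lra|].
  rewrite <- Hsq; field; lra.
Qed.

Lemma vscale_direction p : 0 < enorm p -> vscale (enorm p) (vscale (/ enorm p) p) = p.
Proof.
  intros Hp; destruct p as [[p1 p2] p3]; unfold vscale; cbn [px py pz fst snd].
  f_equal; [f_equal|]; field; lra.
Qed.

Lemma plane_point_1_0 u e : plane_point u e 1 0 = u.
Proof. destruct u as [[u1 u2] u3]; pt_unfold; f_equal; [f_equal|]; ring. Qed.

Lemma exists_orthogonal_unit u : exists e, dot e e = 1 /\ dot u e = 0.
Proof.
  destruct u as [[u1 u2] u3].
  destruct (Req_dec (u1 * u1 + u2 * u2) 0) as [Z | NZ].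
  - exists (1, 0, 0); pt_unfold; split; nra.
  - assert (P : 0 < u1 * u1 + u2 * u2) by nra.
    set (s := sqrt (u1 * u1 + u2 * u2)).
    assert (Hs : 0 < s) by now apply sqrt_lt_R0.
    assert (Hs2 : s * s = u1 * u1 + u2 * u2) by (apply sqrt_sqrt; lra).
    exists (- u2 / s, u1 / s, 0); pt_unfold; split; [|field; lra].
    transitivity ((u1 * u1 + u2 * u2) / (s * s)); [field; lra|].
    rewrite Hs2; field; lra.
Qed.

Lemma unit_on_great_circle u w : dot u u = 1 -> dot w w = 1 ->
  exists th e, 0 <= th <= PI /\ orthonormal u e /\ w = plane_point u e (cos th) (sin th).
Proof.
  intros Hu Hw.
  pose proof PI_RGT_0 as Hpi.
  set (c := dot u w).
  assert (Hc : c * c <= 1) by (pose proof (dot_Cauchy_Schwarz u w) as CS; fold c in CS; nra).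
  destruct (exists_orthogonal_unit u) as (e0 & He0 & Hue0).
  destruct (Req_dec c 1) as [Hc1 | Hc1]; [|destruct (Req_dec c (-1)) as [Hcm1 | Hcm1]].
  - exists 0, e0; rewrite cos_0, sin_0; repeat split; try lra; try assumption.
    assert (D : dot (vadd w (vscale (-1) u)) (vadd w (vscale (-1) u)) = 0).
    { transitivity (dot w w - 2 * c + dot u u); [unfold c; pt_unfold; ring|lra]. }
    apply dot_self_eq0 in D; clearbody c; destruct u as [[u1 u2] u3], w as [[w1 w2] w3].
    pt_unfold; injection D; intros; f_equal; [f_equal|]; lra.
  - exists PI, e0; rewrite cos_PI, sin_PI; repeat split; try lra; try assumption.
    assert (D : dot (vadd w u) (vadd w u) = 0).
    { transitivity (dot w w + 2 * c + dot u u); [unfold c; pt_unfold; ring|lra]. }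
    apply dot_self_eq0 in D; clearbody c; destruct u as [[u1 u2] u3], w as [[w1 w2] w3].
    pt_unfold; injection D; intros; f_equal; [f_equal|]; lra.
  - (* [e] is the normalized component of [w] orthogonal to [u], and [th = acos (u.w)]. *)
    assert (Hcb : -1 < c < 1) by (assert (-1 <= c <= 1) by nra; lra).
    assert (Hs2 : sqrt (1 - c²) * sqrt (1 - c²) = 1 - c * c)
      by (rewrite sqrt_sqrt; unfold Rsqr; nra).
    set (s := sqrt (1 - c²)) in *.
    assert (Hs : 0 < s) by (apply sqrt_lt_R0; unfold Rsqr; nra).
    exists (acos c), (vscale (/ s) (vadd w (vscale (- c) u))).
    rewrite cos_acos, sin_acos by lra; fold s.
    split; [apply acos_bound|]; split; [split; [exact Hu|split]|].
    + transitivity ((dot w w - 2 * c * dot u w + c * c * dot u u) / (s * s));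
        [unfold c; pt_unfold; field; lra|].
      rewrite Hu, Hw, Hs2; fold c; field; nra.
    + transitivity ((dot u w - c * dot u u) / s); [pt_unfold; field; lra|].
      rewrite Hu; fold c; field_simplify; lra.
    + clearbody c s; destruct u as [[u1 u2] u3], w as [[w1 w2] w3].
      pt_unfold; f_equal; [f_equal|]; field; lra.
Qed.

Definition C1_curve (g : R -> pt) : Prop :=
  C1 (fun t => px (g t)) /\ C1 (fun t => py (g t)) /\ C1 (fun t => pz (g t)).

(* A smooth stand-in for the radius [enorm p], which is not differentiable at the vertex. *)
Definition smoothed_radius (d : R) (p : pt) : R := sqrt (dot p p + d * d).

Lemma radial_rate_le_speed eps P V d : 0 < d ->
  Rabs (dot P V / smoothed_radius d P) <= sqrt (metric_sq eps P V).
Proof.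
  intros Hd; unfold smoothed_radius, metric_sq.
  pose proof (dot_self_ge0 P) as HPP; pose proof (dot_self_ge0 V) as HVV.
  pose proof (dot_Cauchy_Schwarz P V) as CS.
  destruct (Req_EM_T (enorm P) 0) as [E | E].
  - apply enorm_eq0 in E; subst P.
    replace (dot origin V) with 0 by (pt_unfold; ring).
    rewrite Rdiv_0_l, Rabs_R0, sqrt_0; lra.
  - pose proof (enorm_sqr P) as Hr2.
    set (r := enorm P) in *.
    assert (Hr : 0 < r) by (assert (0 <= r) by apply sqrt_pos; lra).
    set (vr := dot P V / r).
    assert (Hvr : vr ^ 2 <= dot V V).
    { unfold vr; replace ((dot P V / r) ^ 2) with (dot P V * dot P V / (r * r)) by (field; lra).
      apply Rmult_le_reg_r with (r * r); [nra|].
      unfold Rdiv; rewrite Rmult_assoc, Rinv_l by nra; nra. }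
    apply Rle_trans with (sqrt (vr ^ 2)).
    + rewrite <- (pow2_abs vr), sqrt_pow2 by apply Rabs_pos.
      assert (Hs : 0 < sqrt (dot P P + d * d)) by (apply sqrt_lt_R0; nra).
      unfold vr; rewrite !Rabs_div, (Rabs_pos_eq r), (Rabs_pos_eq (sqrt _)) by (apply sqrt_pos || lra).
      apply Rmult_le_compat_l; [apply Rabs_pos|].
      apply Rinv_le_contravar; [lra|].
      unfold r, enorm; apply sqrt_le_1; nra.
    + pose proof (pow2_ge_0 (/ 2 * Rpower r (1 + eps) / r)).
      apply sqrt_le_1; fold vr; nra.
Qed.

Lemma smoothed_radius_pos d p : 0 < d -> 0 < smoothed_radius d p.
Proof. intros Hd; apply sqrt_lt_R0; pose proof (dot_self_ge0 p); nra. Qed.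

Section SmoothedRadius.

Variables (g : R -> pt) (d : R).
Hypotheses (Hg : C1_curve g) (Hd : 0 < d).

Definition smoothed_radius_rate (s : R) : R :=
  dot (g s) (velocity g s) / smoothed_radius d (g s).

Lemma is_derive_smoothed_radius s :
  is_derive (fun t => smoothed_radius d (g t)) s (smoothed_radius_rate s).
Proof.
  destruct Hg as (Cx & Cy & Cz).
  destruct (Cx s) as [Ex _], (Cy s) as [Ey _], (Cz s) as [Ez _].
  pose proof (dot_self_ge0 (g s)) as Hge.
  pose proof (smoothed_radius_pos d (g s) Hd) as Hpos.
  unfold smoothed_radius_rate, smoothed_radius, velocity in *; pt_unfold.
  set (fx := fun t => px (g t)) in *; set (fy := fun t => py (g t)) in *;
    set (fz := fun t => pz (g t)) in *.
  change (px (g ?t)) with (fx t); change (py (g ?t)) with (fy t);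
    change (pz (g ?t)) with (fz t).
  auto_derive.
  - repeat split; auto; unfold fx, fy, fz; nra.
  - change (fun x => ?f x) with f; field; unfold fx, fy, fz; lra.
Qed.

Lemma continuous_smoothed_radius_rate s : continuous smoothed_radius_rate s.
Proof.
  destruct Hg as (Cx & Cy & Cz).
  destruct (Cx s) as [Ex Dx], (Cy s) as [Ey Dy], (Cz s) as [Ez Dz].
  apply ex_derive_continuous in Ex, Ey, Ez.
  pose proof (smoothed_radius_pos d (g s) Hd) as Hpos.
  unfold smoothed_radius_rate, smoothed_radius, velocity, Rdiv in *; pt_unfold.
  apply (continuous_mult (U := R_UniformSpace) (K := R_AbsRing)).
  - repeat apply (continuous_plus (U := R_UniformSpace) (K := R_AbsRing) (V := R_NormedModule));
      apply (continuous_mult (U := R_UniformSpace) (K := R_AbsRing)); assumption.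
  - apply continuous_Rinv_comp; [|lra].
    apply continuous_sqrt_comp,
      (continuous_plus (U := R_UniformSpace) (K := R_AbsRing) (V := R_NormedModule));
      [|apply continuous_const].
    repeat apply (continuous_plus (U := R_UniformSpace) (K := R_AbsRing) (V := R_NormedModule));
      apply (continuous_mult (U := R_UniformSpace) (K := R_AbsRing)); assumption.
Qed.

Lemma smoothed_radius_change_le_RInt_speed eps a b : a < b ->
  ex_RInt (speed eps g) a b ->
  Rabs (smoothed_radius d (g b) - smoothed_radius d (g a)) <= RInt (speed eps g) a b.
Proof.
  intros Hab Hsp.
  set (h := fun t => smoothed_radius d (g t)).
  assert (HI : is_RInt smoothed_radius_rate a b (h b - h a)).
  { apply (is_RInt_derive h); intros.
    - apply is_derive_smoothed_radius.
    - apply continuous_smoothed_radius_rate. }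
  assert (Ed : ex_RInt smoothed_radius_rate a b) by (eexists; exact HI).
  assert (Bound : forall s, Rabs (smoothed_radius_rate s) <= speed eps g s)
    by (intros s; apply radial_rate_le_speed, Hd).
  apply Rabs_le; split.
  - assert (Hopp : RInt (fun s => - smoothed_radius_rate s) a b <= RInt (speed eps g) a b).
    { apply RInt_le; [lra | exact (ex_RInt_opp _ a b Ed) | exact Hsp|].
      intros s _; specialize (Bound s); rewrite <- Rabs_Ropp in Bound;
        pose proof (Rle_abs (- smoothed_radius_rate s)); lra. }
    assert (Eopp : RInt (fun s => - smoothed_radius_rate s) a b = - RInt smoothed_radius_rate a b)
      by exact (RInt_opp _ a b Ed).
    rewrite Eopp, (is_RInt_unique _ _ _ _ HI) in Hopp; unfold h in Hopp; lra.
  - change (h b - h a <= RInt (speed eps g) a b).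
    rewrite <- (is_RInt_unique _ _ _ _ HI).
    apply RInt_le; [lra | exact Ed | exact Hsp|].
    intros s _; specialize (Bound s); pose proof (Rle_abs (smoothed_radius_rate s)); lra.
Qed.

End SmoothedRadius.

Lemma sqrt_add_sqr_le A d : 0 <= A -> 0 < d -> sqrt A <= sqrt (A + d * d) <= sqrt A + d.
Proof.
  intros HA Hd; pose proof (sqrt_pos A); pose proof (sqrt_sqrt A HA); split.
  - apply sqrt_le_1; nra.
  - rewrite <- (sqrt_pow2 (sqrt A + d)) by lra; apply sqrt_le_1; nra.
Qed.

Lemma radius_change_le_RInt_speed eps g a b : C1_curve g -> a < b ->
  ex_RInt (speed eps g) a b ->
  Rabs (enorm (g b) - enorm (g a)) <= RInt (speed eps g) a b.
Proof.
  intros Hg Hab Hsp; apply le_epsilon; intros d Hd.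
  pose proof (smoothed_radius_change_le_RInt_speed g d Hg Hd eps a b Hab Hsp) as Hsm.
  pose proof (sqrt_add_sqr_le _ d (dot_self_ge0 (g b)) Hd) as Hb.
  pose proof (sqrt_add_sqr_le _ d (dot_self_ge0 (g a)) Hd) as Ha.
  unfold smoothed_radius, enorm in *.
  revert Hsm Hb Ha; generalize (sqrt (dot (g b) (g b))) (sqrt (dot (g a) (g a))).
  intros; unfold Rabs in *; repeat destruct Rcase_abs; lra.
Qed.

Lemma radius_change_le_curve_length eps c x y L :
  curve_length_is eps c x y L -> Rabs (enorm y - enorm x) <= L.
Proof.
  intros (H0 & H1 & n & p & g & Hp0 & Hpn & Hinc & Hpc & HL).
  assert (Ind : forall k, (k <= n)%nat -> Rabs (enorm (c (p k)) - enorm x) <=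
     psum (fun i => RInt (speed eps (g i)) (p i) (p (S i))) k).
  { induction k as [|k IH]; intros Hk; cbn [psum].
    - rewrite Hp0, H0, Rminus_diag, Rabs_R0; lra.
    - specialize (IH ltac:(lia)).
      destruct (Hpc k ltac:(lia)) as [(Cx & Cy & Cz & Ag) Ei].
      pose proof (Hinc k ltac:(lia)) as Hlt.
      pose proof (radius_change_le_RInt_speed eps (g k) _ _ (conj Cx (conj Cy Cz)) Hlt Ei)
        as Hpiece.
      rewrite !Ag in Hpiece by lra.
      pose proof (Rabs_triang (enorm (c (p (S k))) - enorm (c (p k))) (enorm (c (p k)) - enorm x))
        as Htri.
      replace (enorm (c (p (S k))) - enorm (c (p k)) + (enorm (c (p k)) - enorm x))
        with (enorm (c (p (S k))) - enorm x) in Htri by ring.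
      lra. }
  specialize (Ind n (Nat.le_refl n)); rewrite Hpn, H1 in Ind; lra.
Qed.

(* [real] sends the infinite values of [Glb_Rbar] to [0]. *)
Lemma Glb_Rbar_real_ge (E : R -> Prop) lb : (forall L, E L -> lb <= L) ->
  real (Glb_Rbar E) = 0 \/ lb <= real (Glb_Rbar E).
Proof.
  intros HE; destruct (Glb_Rbar_correct E) as [_ Hg].
  destruct (Glb_Rbar E); cbn; auto.
  right; apply (Hg (Finite lb)); intros L HL; apply HE, HL.
Qed.

Lemma Glb_Rbar_real_le (E : R -> Prop) L : (forall L', E L' -> 0 <= L') -> E L ->
  real (Glb_Rbar E) <= L.
Proof.
  intros HE HL; destruct (Glb_Rbar_correct E) as [Hl Hg].
  pose proof (Hl L HL) as HleL.
  assert (Hge0 : Rbar_le (Finite 0) (Glb_Rbar E)) by (apply Hg; intros L' HL'; apply HE, HL').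
  destruct (Glb_Rbar E); cbn in *; [exact HleL | lra | contradiction].
Qed.

Lemma ldist_ge_radius_change eps x y :
  ldist eps x y = 0 \/ Rabs (enorm y - enorm x) <= ldist eps x y.
Proof.
  apply Glb_Rbar_real_ge; intros L [c Hc]; exact (radius_change_le_curve_length eps c x y L Hc).
Qed.

Lemma ldist_le_length eps c x y L : curve_length_is eps c x y L -> ldist eps x y <= L.
Proof.
  intros Hc; apply Glb_Rbar_real_le; [|exists c; exact Hc].
  intros L' [c' Hc']; pose proof (radius_change_le_curve_length eps c' x y L' Hc').
  pose proof (Rabs_pos (enorm y - enorm x)); lra.
Qed.

Lemma C1_of_is_derive f f' :
  (forall t, is_derive f t (f' t)) -> (forall t, continuous f' t) -> C1 f.
Proof.
  intros Df Cf t; split; [exists (f' t); apply Df|].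
  apply continuous_ext with f'; [|apply Cf].
  intros s; symmetry; apply is_derive_unique, Df.
Qed.

Lemma C1_lin_comb f h a b : C1 f -> C1 h -> C1 (fun s => f s * a + h s * b).
Proof.
  intros Cf Ch; apply C1_of_is_derive with (fun s => Derive f s * a + Derive h s * b).
  - intros t; destruct (Cf t) as [Ef _], (Ch t) as [Eh _].
    auto_derive; [auto | change (fun x => ?g x) with g; ring].
  - intros t; destruct (Cf t) as [_ Df], (Ch t) as [_ Dh].
    apply (continuous_plus (U := R_UniformSpace) (K := R_AbsRing) (V := R_NormedModule));
      apply (continuous_mult (U := R_UniformSpace) (K := R_AbsRing));
      auto using continuous_const.
Qed.

Lemma C1_curve_plane u e f h : C1 f -> C1 h -> C1_curve (fun s => plane_point u e (f s) (h s)).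
Proof. intros Cf Ch; unfold C1_curve; pt_unfold; split; [|split]; apply C1_lin_comb; assumption. Qed.

Lemma C1_curve_const (q : pt) : C1_curve (fun _ => q).
Proof.
  unfold C1_curve; split; [|split];
    (apply C1_of_is_derive with (fun _ => 0); intros t; [auto_derive; auto | apply continuous_const]).
Qed.

Lemma velocity_plane_curve u e f h t f' h' : is_derive f t f' -> is_derive h t h' ->
  velocity (fun s => plane_point u e (f s) (h s)) t = plane_point u e f' h'.
Proof.
  intros Hf Hh.
  assert (Ef : ex_derive f t) by (eexists; exact Hf).
  assert (Eh : ex_derive h t) by (eexists; exact Hh).
  rewrite <- (is_derive_unique _ _ _ Hf), <- (is_derive_unique _ _ _ Hh).
  unfold velocity; pt_unfold.
  f_equal; [f_equal|]; apply is_derive_unique; auto_derive; auto;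
    change (fun x => ?g x) with g; ring.
Qed.

Lemma speed_const eps (q : pt) t : speed eps (fun _ => q) t = 0.
Proof.
  unfold speed, velocity; rewrite !Derive_const.
  unfold metric_sq; destruct Req_EM_T as [_ | Hq]; [apply sqrt_0|].
  pt_unfold; transitivity (sqrt 0); [f_equal; field; exact Hq | apply sqrt_0].
Qed.

Lemma RInt_const_on f a b K : a < b -> (forall t, a < t < b -> f t = K) ->
  ex_RInt f a b /\ RInt f a b = (b - a) * K.
Proof.
  intros Hab H.
  assert (Hext : forall t, Rmin a b < t < Rmax a b -> K = f t)
    by (rewrite Rmin_left, Rmax_right by lra; intros t Ht; symmetry; apply H, Ht).
  split.
  - apply ex_RInt_ext with (fun _ => K); [exact Hext | apply ex_RInt_const].
  - rewrite <- (RInt_ext _ _ _ _ Hext), RInt_const; reflexivity.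
Qed.

Definition concat3 (g0 g1 g2 : R -> pt) (s : R) : pt :=
  if Rle_dec s (1/3) then g0 s else if Rle_dec s (2/3) then g1 s else g2 s.

Lemma curve_length_concat3 eps x y g0 g1 g2 K0 K1 K2 :
  C1_curve g0 -> C1_curve g1 -> C1_curve g2 ->
  g0 0 = x -> g0 (1/3) = g1 (1/3) -> g1 (2/3) = g2 (2/3) -> g2 1 = y ->
  (forall t, 0 < t < 1/3 -> speed eps g0 t = K0) ->
  (forall t, 1/3 < t < 2/3 -> speed eps g1 t = K1) ->
  (forall t, 2/3 < t < 1 -> speed eps g2 t = K2) ->
  curve_length_is eps (concat3 g0 g1 g2) x y ((K0 + K1 + K2) / 3).
Proof.
  intros (C0x & C0y & C0z) (C1x & C1y & C1z) (C2x & C2y & C2z) Ex E01 E12 Ey S0 S1 S2.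
  destruct (RInt_const_on _ 0 (1/3) K0 ltac:(lra) S0) as [I0 R0].
  destruct (RInt_const_on _ (1/3) (2/3) K1 ltac:(lra) S1) as [I1 R1].
  destruct (RInt_const_on _ (2/3) 1 K2 ltac:(lra) S2) as [I2 R2].
  unfold concat3; split; [|split].
  { destruct Rle_dec; [exact Ex | lra]. }
  { do 2 (destruct Rle_dec; [lra|]); exact Ey. }
  exists 3%nat, (fun i => match i with O => 0 | S O => 1/3 | S (S O) => 2/3 | _ => 1 end),
    (fun i => match i with O => g0 | S O => g1 | _ => g2 end).
  split; [reflexivity|]; split; [reflexivity|]; split; [|split].
  - intros [|[|[|i]]] Hi; [lra | lra | lra | lia].
  - intros [|[|[|i]]] Hi; [| | | lia];
      (split; [refine (conj _ (conj _ (conj _ _))); try assumption | assumption]);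
      intros t Ht; repeat destruct Rle_dec; try solve [reflexivity | lra];
      [replace t with (1/3) by lra | replace t with (2/3) by lra]; symmetry; assumption.
  - cbn [psum]; rewrite R0, R1, R2; field.
Qed.

Lemma ldist_self_le0 eps q : ldist eps q q <= 0.
Proof.
  replace 0 with ((0 + 0 + 0) / 3) by field.
  apply ldist_le_length with (concat3 (fun _ => q) (fun _ => q) (fun _ => q)).
  apply curve_length_concat3; auto using C1_curve_const; intros; apply speed_const.
Qed.

Definition polar_path (u e : pt) (r0 r1 a0 a1 s : R) : pt :=
  plane_point u e ((r0 + r1 * s) * cos (a0 + a1 * s)) ((r0 + r1 * s) * sin (a0 + a1 * s)).

Lemma polar_path_at u e r0 r1 a0 a1 s r a : r0 + r1 * s = r -> a0 + a1 * s = a ->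
  polar_path u e r0 r1 a0 a1 s = plane_point u e (r * cos a) (r * sin a).
Proof. intros <- <-; reflexivity. Qed.

Lemma C1_curve_polar_path u e r0 r1 a0 a1 : C1_curve (polar_path u e r0 r1 a0 a1).
Proof.
  apply C1_curve_plane; [
    apply C1_of_is_derive with
      (fun s => r1 * cos (a0 + a1 * s) - (r0 + r1 * s) * a1 * sin (a0 + a1 * s)) |
    apply C1_of_is_derive with
      (fun s => r1 * sin (a0 + a1 * s) + (r0 + r1 * s) * a1 * cos (a0 + a1 * s))];
  intros t; [auto_derive; [exact I | ring] | apply ex_derive_continuous; auto_derive; exact I
            |auto_derive; [exact I | ring] | apply ex_derive_continuous; auto_derive; exact I].
Qed.

Lemma enorm_polar u e r a : orthonormal u e -> 0 <= r ->
  enorm (plane_point u e (r * cos a) (r * sin a)) = r.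
Proof.
  intros Hue Hr; unfold enorm; rewrite dot_plane_point by exact Hue.
  transitivity (sqrt (r ^ 2)); [f_equal | apply sqrt_pow2, Hr].
  pose proof (sin2_cos2 a) as Hcs; unfold Rsqr in Hcs.
  transitivity (r ^ 2 * (sin a * sin a + cos a * cos a)); [ring | rewrite Hcs; ring].
Qed.

Lemma speed_polar_path eps u e r0 r1 a0 a1 t : orthonormal u e -> 0 < r0 + r1 * t ->
  speed eps (polar_path u e r0 r1 a0 a1) t
  = sqrt (r1 ^ 2 + (/ 2 * Rpower (r0 + r1 * t) (1 + eps) * a1) ^ 2).
Proof.
  intros Hue Hr; unfold speed, polar_path.
  rewrite (velocity_plane_curve u e _ _ t
    (r1 * cos (a0 + a1 * t) - (r0 + r1 * t) * a1 * sin (a0 + a1 * t))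
    (r1 * sin (a0 + a1 * t) + (r0 + r1 * t) * a1 * cos (a0 + a1 * t)))
    by (auto_derive; [exact I | ring]).
  unfold metric_sq.
  set (r := r0 + r1 * t) in *; set (a := a0 + a1 * t).
  rewrite enorm_polar by (assumption || lra).
  destruct Req_EM_T as [Z | _]; [lra|].
  rewrite !dot_plane_point by exact Hue.
  pose proof (sin2_cos2 a) as Hcs; unfold Rsqr in Hcs.
  replace (r * cos a * (r1 * cos a - r * a1 * sin a) + r * sin a * (r1 * sin a + r * a1 * cos a))
    with (r * r1 * (sin a * sin a + cos a * cos a)) by ring.
  replace ((r1 * cos a - r * a1 * sin a) * (r1 * cos a - r * a1 * sin a)
           + (r1 * sin a + r * a1 * cos a) * (r1 * sin a + r * a1 * cos a))
    with ((r1 ^ 2 + r ^ 2 * a1 ^ 2) * (sin a * sin a + cos a * cos a)) by ring.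
  rewrite Hcs; f_equal; field; lra.
Qed.

Lemma speed_polar_ray eps u e r0 r1 a0 t : orthonormal u e -> 0 < r0 + r1 * t ->
  speed eps (polar_path u e r0 r1 a0 0) t = Rabs r1.
Proof.
  intros Hue Hr; rewrite speed_polar_path by assumption.
  rewrite Rmult_0_r, pow_i, Rplus_0_r by lia.
  rewrite <- (pow2_abs r1); apply sqrt_pow2, Rabs_pos.
Qed.

Lemma speed_polar_circle eps u e r0 a0 a1 t : orthonormal u e -> 0 < r0 ->
  speed eps (polar_path u e r0 0 a0 a1) t = / 2 * Rpower r0 (1 + eps) * Rabs a1.
Proof.
  intros Hue Hr; rewrite speed_polar_path by (rewrite ?Rmult_0_l, ?Rplus_0_r; assumption).
  rewrite Rmult_0_l, Rplus_0_r, pow_i, Rplus_0_l by lia.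
  assert (HA : 0 < Rpower r0 (1 + eps)) by apply exp_pos.
  rewrite <- (pow2_abs (_ * a1)), sqrt_pow2 by apply Rabs_pos.
  rewrite Rabs_mult, (Rabs_pos_eq (/ 2 * _)); lra.
Qed.

Lemma Rpower_lt_self m eps : 0 < m < 1 -> 0 < eps -> Rpower m (1 + eps) < m.
Proof.
  intros Hm He; rewrite Rpower_plus, Rpower_1 by lra.
  assert (Rpower m eps < 1).
  { unfold Rpower; rewrite <- exp_0; apply exp_increasing.
    assert (ln m < 0) by (rewrite <- ln_1; apply ln_increasing; lra); nra. }
  nra.
Qed.

Lemma ldist_lt_sum_radii eps x y : 0 < eps -> 0 < enorm x < 1 -> 0 < enorm y < 1 ->
  ldist eps x y < enorm x + enorm y.
Proof.
  intros Heps Hx Hy.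
  pose proof (direction_unit x (proj1 Hx)) as Hu.
  pose proof (direction_unit y (proj1 Hy)) as Hw.
  pose proof (vscale_direction x (proj1 Hx)) as Hxu.
  pose proof (vscale_direction y (proj1 Hy)) as Hyw.
  set (rx := enorm x) in *; set (ry := enorm y) in *.
  set (u := vscale (/ rx) x) in *; set (w := vscale (/ ry) y) in *.
  destruct (unit_on_great_circle u w Hu Hw) as (th & e & Hth & Hue & Hwe).
  set (m := Rmin rx ry).
  assert (Hm : 0 < m <= rx /\ m <= ry)
    by (unfold m; repeat split; [apply Rmin_glb_lt; lra | apply Rmin_l | apply Rmin_r]).
  set (A := Rpower m (1 + eps)).
  assert (HA : 0 < A < m) by (split; [apply exp_pos | apply Rpower_lt_self; lra]).
  eapply Rle_lt_trans.
  - apply ldist_le_length with (concat3 (polar_path u e rx (3 * (m - rx)) 0 0)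
      (polar_path u e m 0 (- th) (3 * th)) (polar_path u e (3 * m - 2 * ry) (3 * (ry - m)) th 0)).
    apply curve_length_concat3; try apply C1_curve_polar_path.
    + rewrite (polar_path_at _ _ _ _ _ _ _ rx 0) by ring.
      rewrite cos_0, sin_0, plane_point_scale, plane_point_1_0; exact Hxu.
    + rewrite !(polar_path_at _ _ _ _ _ _ _ m 0) by field; reflexivity.
    + rewrite !(polar_path_at _ _ _ _ _ _ _ m th) by field; reflexivity.
    + rewrite (polar_path_at _ _ _ _ _ _ _ ry th) by ring.
      rewrite plane_point_scale, <- Hwe; exact Hyw.
    + intros t Ht; apply speed_polar_ray; [exact Hue | nra].
    + intros t Ht; apply speed_polar_circle; [exact Hue | lra].
    + intros t Ht; apply speed_polar_ray; [exact Hue | nra].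
  - fold A; rewrite (Rabs_left1 (3 * (m - rx))), !Rabs_pos_eq by lra.
    pose proof PI_4; nra.
Qed.

Lemma radius_le_ldist_to_vertex eps x : 0 < ldist eps x origin ->
  0 < enorm x <= ldist eps x origin.
Proof.
  intros Hd; destruct (ldist_ge_radius_change eps x origin) as [Z | L]; [lra|].
  rewrite enorm_origin, Rabs_minus_sym, Rminus_0_r, Rabs_pos_eq in L by apply sqrt_pos.
  split; [|exact L].
  destruct (Req_dec (enorm x) 0) as [Z | NZ]; [|pose proof (sqrt_pos (dot x x)); unfold enorm in *; lra].
  apply enorm_eq0 in Z; subst x; pose proof (ldist_self_le0 eps origin); lra.
Qed.

Lemma radius_le_ldist_from_vertex eps y : 0 < ldist eps origin y ->
  0 < enorm y <= ldist eps origin y.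
Proof.
  intros Hd; destruct (ldist_ge_radius_change eps origin y) as [Z | L]; [lra|].
  rewrite enorm_origin, Rminus_0_r, Rabs_pos_eq in L by apply sqrt_pos.
  split; [|exact L].
  destruct (Req_dec (enorm y) 0) as [Z | NZ]; [|pose proof (sqrt_pos (dot y y)); unfold enorm in *; lra].
  apply enorm_eq0 in Z; subst y; pose proof (ldist_self_le0 eps origin); lra.
Qed.

Theorem lemma7p2 (eps : R) (heps : 0 < eps) :
  exists eta : R, 0 < eta /\
    forall x y : pt, enorm x < eta -> enorm y < eta ->
    forall gam : R -> pt, geodesic eps x y gam ->
      ~ (exists t : R, 0 < t < ldist eps x y /\ gam t = origin).
Proof.
  exists 1; split; [lra|].
  intros x y Hx Hy gam (G0 & GD & Giso) [t [Ht Gt]].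
  assert (Hxo : ldist eps x origin = t)
    by (rewrite <- G0, <- Gt, Giso by lra; rewrite Rabs_left; lra).
  assert (Hoy : ldist eps origin y = ldist eps x y - t)
    by (rewrite <- GD at 1; rewrite <- Gt, Giso by lra; rewrite Rabs_left; lra).
  pose proof (radius_le_ldist_to_vertex eps x ltac:(lra)) as Rx.
  pose proof (radius_le_ldist_from_vertex eps y ltac:(lra)) as Ry.
  pose proof (ldist_lt_sum_radii eps x y heps ltac:(lra) ltac:(lra)); lra.
Qed.
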